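(* Let $k$ be a subfield of a field $f$ and let $G$ be a subgroup of the multiplicative group $f^*$ such that: $k^*\le G$; the quotient group $G/k^*$ is torsion; if $G/k^*$ has an element of order $4$, then $k$ contains a primitive $4$-th root of $1$; for every prime $p\in \pi(t(G))\cap\pi(G/k^* )$ the field $k$ contains a primitive $p$-th root of $1$; and $\operatorname{char}k\notin\pi(G/k^* )$. Let $g\in G\setminus k^*$ and let $t$ be the order of the image $gk^*$ of $g$ in $G/k^*$. Then $[k(g):k]=t$.
   Context: For a field $f$, $f^*$ denotes its multiplicative group. For an abelian group $A$, $t(A)$ denotes its torsion subgroup; for a torsion abelian group $X$, $\pi(X)$ denotes the set of primes dividing orders of elements of $X$. For a subfield $k$ and a subset $S$ of $f$, $k(S)$ is the subfield generated by $k$ and $S$, and $[f:k]$ is the dimension of $f$ over $k$. *)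

From HB Require Import structures.
From mathcomp Require Import all_boot all_order all_algebra.
Set Implicit Arguments. Unset Strict Implicit. Unset Printing Implicit Defensive.
Import GRing.Theory.
Local Open Scope ring_scope.

Definition is_subfield (f : fieldType) (S : f -> Prop) : Prop :=
  [/\ S 0, S 1,
      (forall x y, S x -> S y -> S (x - y)),
      (forall x y, S x -> S y -> S (x * y)) &
      (forall x, S x -> x != 0 -> S x^-1)].

Definition is_mult_subgroup (f : fieldType) (G : f -> Prop) : Prop :=
  [/\ (forall x, G x -> x != 0), G 1,
      (forall x y, G x -> G y -> G (x * y)) &
      (forall x, G x -> G x^-1)].

Definition adjoin (f : fieldType) (k : f -> Prop) (g : f) : f -> Prop :=
  fun x => forall L : f -> Prop,
    is_subfield L -> (forall y, k y -> L y) -> L g -> L x.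

Definition ext_dim (f : fieldType) (k L : f -> Prop) (n : nat) : Prop :=
  exists b : 'I_n -> f,
    [/\ (forall i, L (b i)),
        (forall c : 'I_n -> f, (forall i, k (c i)) ->
           \sum_(i < n) c i * b i = 0 -> forall i, c i = 0) &
        (forall x, L x -> exists c : 'I_n -> f,
           (forall i, k (c i)) /\ x = \sum_(i < n) c i * b i)].

(* for g in G (so g nonzero), the coset g k^* has order n in G/k^* *)
Definition coset_order (f : fieldType) (k : f -> Prop) (g : f) (n : nat) : Prop :=
  [/\ (0 < n)%N, k (g ^+ n) & forall m, (0 < m < n)%N -> ~ k (g ^+ m)].

Definition quot_torsion (f : fieldType) (k G : f -> Prop) : Prop :=
  forall g, G g -> exists n, coset_order k g n.

Definition in_pi_quot (f : fieldType) (k G : f -> Prop) (p : nat) : Prop :=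
  exists g n, [/\ G g, coset_order k g n & (p %| n)%N].

Definition in_pi_tors (f : fieldType) (G : f -> Prop) (p : nat) : Prop :=
  exists x n, [/\ G x, (0 < n)%N, n.-primitive_root x & (p %| n)%N].

Definition has_prim_root (f : fieldType) (k : f -> Prop) (n : nat) : Prop :=
  exists z, k z /\ n.-primitive_root z.

(* Let t = s p with p = pdiv t and h = g^p, of coset order s. By induction the powers
   of h below s are free over k, so k(h) = k[h], and by a tower argument it suffices
   that the powers of g below p are free over k(h). Otherwise, as g^p = h, the
   determinant of a companion matrix shows that h = c^p for some c in k(h), and the
   norm of c down to k is an N in k with N^p = (-1)^(s+1) g^t. Up to sign, g^t is then
   a q-th power d^q in k for a prime q | t, and g^(t/q) / d is a q-th root of unity in
   G outside k, which the hypothesis on pi(t(G)) and pi(G/k^* ) forbids; in the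
   remaining case (p = 2, s even) -g^t = N^2 with 4 | t, and g^(t/2) / N is a square
   root of -1 outside k, although g^(t/4) has coset order 4. *)

From mathcomp Require Import all_boot all_order all_algebra.
From Stdlib Require Import Classical.
From mathcomp Require Import ring zify.
Import GRing.Theory.
Local Open Scope ring_scope.
Set Implicit Arguments. Unset Strict Implicit. Unset Printing Implicit Defensive.

Lemma size_subr_lead_coef (R : nzRingType) (A B : {poly R}) :
  A != 0 -> size B = size A -> lead_coef B = lead_coef A -> (size (A - B)%R < size A)%N.
Proof.
move=> A0 eS eL; have sA : (0 < size A)%N by rewrite size_poly_gt0.
rewrite -(prednK sA) ltnS; apply/leq_sizeP => j hj.
rewrite coefB; case: (ltngtP j (size A).-1) => hj'.
- by move: hj; rewrite leqNgt hj'.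
- by rewrite !nth_default ?subrr // ?eS -(prednK sA).
- by rewrite hj' -eS -!lead_coefE eS eL subrr.
Qed.

Lemma ex_min_size (R : nzRingType) (Pr : {poly R} -> Prop) A :
  Pr A -> exists B, Pr B /\ forall C, Pr C -> (size B <= size C)%N.
Proof.
move: {2}(size A) (leqnn (size A)) => n; elim: n A => [|n IH] A sA PrA.
  by exists A; split => // C _; exact: leq_trans sA _.
have [[C [PrC sC]]|noC] := classic (exists C, Pr C /\ (size C < size A)%N).
  by apply: (IH C) => //; rewrite -ltnS (leq_trans sC).
exists A; split => // C PrC; rewrite leqNgt; apply/negP => sC.
by apply: noC; exists C.
Qed.

Lemma det_expr (R : comNzRingType) n (A : 'M[R]_n) k : \det (A ^+ k) = \det A ^+ k.
Proof.
elim: k => [|k IH]; first by rewrite !expr0 det1.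
by rewrite !exprS -mulmxE det_mulmx IH.
Qed.

Section Subfield.
Variables (f : fieldType) (S : f -> Prop).
Hypothesis sfS : is_subfield S.

Lemma subfield0 : S 0. Proof. by case: sfS. Qed.
Lemma subfield1 : S 1. Proof. by case: sfS. Qed.
Lemma subfieldB x y : S x -> S y -> S (x - y). Proof. by case: sfS => _ _ + _ _; apply. Qed.
Lemma subfieldM x y : S x -> S y -> S (x * y). Proof. by case: sfS => _ _ _ + _; apply. Qed.

Lemma subfieldV x : S x -> S x^-1.
Proof.
have [-> _|x0 Sx] := eqVneq x 0; first by rewrite invr0; exact: subfield0.
by case: sfS => _ _ _ _; apply.
Qed.

Lemma subfieldN x : S x -> S (- x).
Proof. by move=> Sx; rewrite -sub0r; apply: subfieldB => //; exact: subfield0. Qed.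

Lemma subfieldD x y : S x -> S y -> S (x + y).
Proof. by move=> Sx Sy; rewrite -[y]opprK; apply: subfieldB => //; exact: subfieldN. Qed.

Lemma subfieldX x n : S x -> S (x ^+ n).
Proof.
move=> Sx; elim: n => [|n IH]; first by rewrite expr0; exact: subfield1.
by rewrite exprS; exact: subfieldM.
Qed.

Lemma subfield_div x y : S x -> S y -> S (x / y).
Proof. by move=> Sx Sy; apply: subfieldM => //; exact: subfieldV. Qed.

Lemma subfield_nat n : S n%:R.
Proof.
elim: n => [|n IH]; first exact: subfield0.
by rewrite -addn1 natrD; apply: subfieldD => //; exact: subfield1.
Qed.

Lemma subfield_sign n : S ((-1) ^+ n).
Proof. exact/subfieldX/subfieldN/subfield1. Qed.

Lemma subfield_sum (I : Type) (r : seq I) (P : pred I) (F : I -> f) :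
  (forall i, P i -> S (F i)) -> S (\sum_(i <- r | P i) F i).
Proof. exact: (big_ind S subfield0 subfieldD). Qed.

Lemma subfield_prod (I : Type) (r : seq I) (P : pred I) (F : I -> f) :
  (forall i, P i -> S (F i)) -> S (\prod_(i <- r | P i) F i).
Proof. exact: (big_ind S subfield1 subfieldM). Qed.

Definition poly_over (P : {poly f}) := forall i, S P`_i.

Lemma poly_over0 : poly_over 0.
Proof. by move=> i; rewrite coef0; exact: subfield0. Qed.

Lemma poly_overC c : S c -> poly_over c%:P.
Proof. by move=> Sc i; rewrite coefC; case: eqP => _ //; exact: subfield0. Qed.

Lemma poly_over1 : poly_over 1.
Proof. by rewrite -polyC1; apply/poly_overC/subfield1. Qed.

Lemma poly_overXn n : poly_over 'X^n.
Proof. by move=> i; rewrite coefXn; case: eqP => _; [exact: subfield1|exact: subfield0]. Qed.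

Lemma poly_overX : poly_over 'X.
Proof. by move=> i; rewrite coefX; case: eqP => _; [exact: subfield1|exact: subfield0]. Qed.

Lemma poly_overD P Q : poly_over P -> poly_over Q -> poly_over (P + Q).
Proof. by move=> SP SQ i; rewrite coefD; exact: subfieldD. Qed.

Lemma poly_overB P Q : poly_over P -> poly_over Q -> poly_over (P - Q).
Proof. by move=> SP SQ i; rewrite coefB; exact: subfieldB. Qed.

Lemma poly_overM P Q : poly_over P -> poly_over Q -> poly_over (P * Q).
Proof. by move=> SP SQ i; rewrite coefM; apply: subfield_sum => j _; exact: subfieldM. Qed.

Lemma poly_overZ c P : S c -> poly_over P -> poly_over (c *: P).
Proof. by move=> Sc SP i; rewrite coefZ; exact: subfieldM. Qed.

Lemma poly_over_exp P n : poly_over P -> poly_over (P ^+ n).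
Proof.
move=> SP; elim: n => [|n IH]; first by rewrite expr0; exact: poly_over1.
by rewrite exprS; exact: poly_overM.
Qed.

Lemma poly_over_XnsubC n c : S c -> poly_over ('X^n - c%:P).
Proof. by move=> Sc; apply: poly_overB; [exact: poly_overXn|exact: poly_overC]. Qed.

Lemma poly_over_lead P : poly_over P -> S (lead_coef P).
Proof. by move=> SP; rewrite lead_coefE; exact: SP. Qed.

Lemma poly_over_monic P : poly_over P -> P != 0 ->
  (lead_coef P)^-1 *: P \is monic /\ poly_over ((lead_coef P)^-1 *: P).
Proof.
move=> SP P0; have lP : lead_coef P != 0 by rewrite lead_coef_eq0.
split; first by apply/monicP; rewrite lead_coefZ mulVf.
by apply: poly_overZ => //; apply/subfieldV/poly_over_lead.
Qed.

Lemma divp_monic_over P Q : poly_over P -> poly_over Q -> Q \is monic ->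
  exists D Rm, [/\ poly_over D, poly_over Rm, P = D * Q + Rm & (size Rm < size Q)%N].
Proof.
move=> SP SQ mQ; have sQ : (0 < size Q)%N by rewrite size_poly_gt0 monic_neq0.
move: {2}(size P) (leqnn (size P)) => n; elim: n P SP => [|n IH] P SP sP.
  exists 0, P; split; rewrite ?mul0r ?add0r //; first exact: poly_over0.
  exact: leq_ltn_trans sQ.
have [ltPQ|leQP] := ltnP (size P) (size Q).
  by exists 0, P; split; rewrite ?mul0r ?add0r //; exact: poly_over0.
have P0 : P != 0 by rewrite -size_poly_gt0 (leq_trans sQ).
set d := (size P - size Q)%N; set M := lead_coef P *: ('X^d * Q).
have SM : poly_over M.
  rewrite /M; apply: poly_overZ; first exact: poly_over_lead.
  by apply: poly_overM => //; exact: poly_overXn.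
have sM : size M = size P.
  by rewrite size_scale ?lead_coef_eq0 // mulrC size_mulXn ?monic_neq0 // subnK.
have lM : lead_coef M = lead_coef P.
  by rewrite lead_coefZ lead_coef_Mmonic ?lead_coefXn ?mulr1.
have [D [Rm [SD SRm eP sRm]]] :=
  IH (P - M) (poly_overB SP SM) (leq_trans (size_subr_lead_coef P0 sM lM) sP).
exists (D + lead_coef P *: 'X^d), Rm; split => //.
  by apply: poly_overD => //; apply: poly_overZ; [exact: poly_over_lead|exact: poly_overXn].
by rewrite mulrDl -addrA (addrC _ Rm) addrA -eP -scalerAl subrK.
Qed.

Lemma ex_gcd_over R Q : poly_over R -> poly_over Q -> Q \is monic ->
  exists B, [/\ B \is monic, poly_over B,
    (exists U V, [/\ poly_over U, poly_over V & B = U * R + V * Q]),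
    (exists DR, poly_over DR /\ R = DR * B) &
    (exists DQ, poly_over DQ /\ Q = DQ * B)].
Proof.
move=> SR SQ mQ.
pose comb A := [/\ poly_over A, A != 0 &
  exists U V, [/\ poly_over U, poly_over V & A = U * R + V * Q]].
have combQ : comb Q.
  split; rewrite ?monic_neq0 //; exists 0, 1; split; [exact: poly_over0|exact: poly_over1|].
  by rewrite mul0r mul1r add0r.
have [A [[SA A0 [U [V [SU SV eA]]]] minA]] := ex_min_size combQ.
set l := (lead_coef A)^-1; have Sl : S l by apply/subfieldV/poly_over_lead.
have [mB SB] := poly_over_monic SA A0; set B := l *: A in mB SB *.
have sB : size B = size A by rewrite size_scale // invr_eq0 lead_coef_eq0.
have dvdB P a b : poly_over P -> poly_over a -> poly_over b ->
    P = a * R + b * Q -> exists D, poly_over D /\ P = D * B.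
  move=> SP Sa Sb eP; have [D [Rm [SD SRm eD sRm]]] := divp_monic_over SP SB mB.
  exists D; split => //; rewrite eD; suff -> : Rm = 0 by rewrite addr0.
  apply: NNPP => /eqP Rm0; suff /minA : comb Rm by rewrite leqNgt -sB sRm.
  split => //; exists (a - D * (l *: U)), (b - D * (l *: V)); split.
  - by apply: poly_overB => //; apply: poly_overM => //; exact: poly_overZ.
  - by apply: poly_overB => //; apply: poly_overM => //; exact: poly_overZ.
  - have -> : Rm = P - D * B by rewrite eD addrC addKr.
    by rewrite eP /B eA -!mul_polyC; ring.
exists B; split => //.
- exists (l *: U), (l *: V); split; try exact: poly_overZ.
  by rewrite /B eA scalerDr -!scalerAl.
- apply: (dvdB R 1 0); rewrite ?mul1r ?mul0r ?addr0 //.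
  + exact: poly_over1.
  + exact: poly_over0.
- apply: (dvdB Q 0 1); rewrite ?mul1r ?mul0r ?add0r //.
  + exact: poly_over0.
  + exact: poly_over1.
Qed.

Definition mx_over m n (M : 'M[f]_(m, n)) := forall i j, S (M i j).

Lemma mx_overM m n p (A : 'M[f]_(m, n)) (B : 'M[f]_(n, p)) :
  mx_over A -> mx_over B -> mx_over (A *m B).
Proof. by move=> SA SB i j; rewrite mxE; apply: subfield_sum => l _; exact: subfieldM. Qed.

Lemma mx_overD m n (A B : 'M[f]_(m, n)) : mx_over A -> mx_over B -> mx_over (A + B).
Proof. by move=> SA SB i j; rewrite mxE; exact: subfieldD. Qed.

Lemma mx_over_scalar n c : S c -> mx_over (c%:M : 'M[f]_n).
Proof.
move=> Sc i j; rewrite mxE; case: (i == j); first by rewrite mulr1n.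
by rewrite mulr0n; exact: subfield0.
Qed.

Lemma mx_over_horner n (C : 'M[f]_n.+1) P :
  mx_over C -> poly_over P -> mx_over (horner_mx C P).
Proof.
move=> SC; elim/poly_ind: P => [|P c IH] SP.
  by rewrite rmorph0 => i j; rewrite mxE; exact: subfield0.
have Sc : S c by move: (SP 0%N); rewrite coefD coefC coefMX /= add0r.
have SP' : poly_over P by move=> i; move: (SP i.+1); rewrite coefD coefC coefMX /= addr0.
rewrite rmorphD rmorphM /= horner_mx_X horner_mx_C.
apply: mx_overD; last exact: mx_over_scalar.
by rewrite -mulmxE; apply: mx_overM => //; exact: IH.
Qed.

Lemma mx_over_det n (A : 'M[f]_n) : mx_over A -> S (\det A).
Proof.
move=> SA; apply: subfield_sum => s _.
by apply: subfieldM; [exact: subfield_sign|apply: subfield_prod].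
Qed.

Lemma companion_over n Q : Q \is monic -> poly_over Q -> size Q = n.+2 ->
  exists C : 'M[f]_n.+1, char_poly C = Q /\ mx_over C.
Proof.
move=> mQ SQ sQ; have := companionmxK mQ.
have SC : mx_over (companionmx Q).
  by move=> i j; rewrite mxE; case: ifP => _; [exact: subfieldN|exact: subfield_nat].
by move: (companionmx Q) SC; rewrite sQ => C SC chC; exists C.
Qed.

Lemma companion_root_det n Q p y : Q \is monic -> poly_over Q -> size Q = n.+2 ->
  (exists D, 'X^p - y%:P = D * Q) -> exists b, S b /\ b ^+ p = y ^+ n.+1.
Proof.
move=> mQ SQ sQ [D eD]; have [C [chC SC]] := companion_over mQ SQ sQ.
have CQ : horner_mx C Q = 0 by rewrite -chC Cayley_Hamilton.
have Cp : C ^+ p = y%:M.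
  apply/eqP; rewrite -subr_eq0; apply/eqP.
  have := congr1 (horner_mx C) eD.
  by rewrite rmorphM /= CQ mulr0 rmorphB /= rmorphXn /= horner_mx_X horner_mx_C.
exists (\det C); split; first exact: mx_over_det.
by rewrite -det_expr Cp det_scalar.
Qed.

Lemma pth_power_of_coprime_pow b y p m : (0 < p)%N -> coprime p m ->
  S b -> S y -> b != 0 -> b ^+ p = y ^+ m -> exists c, S c /\ y = c ^+ p.
Proof.
move=> p0 cop Sb Sy b0 bp; have [a _] := Bezoutl m p0.
rewrite (eqP cop) => /dvdnP [v ev].
exists (y ^+ v / b ^+ a); split; first by apply: subfield_div; exact: subfieldX.
rewrite expr_div_n -!exprM (mulnC a) (exprM b) bp -exprM -ev exprD expr1.
by rewrite (mulnC m) mulfK // mulnC exprM -bp !expf_neq0.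
Qed.

Definition powers_free x n :=
  forall R, poly_over R -> (size R <= n)%N -> R.[x] = 0 -> R = 0.

Lemma ex_minpoly_over x R0 : poly_over R0 -> R0 != 0 -> R0.[x] = 0 ->
  exists Q, [/\ Q \is monic, poly_over Q, Q.[x] = 0, (size Q <= size R0)%N &
     forall C, poly_over C -> C != 0 -> C.[x] = 0 -> (size Q <= size C)%N].
Proof.
move=> SR0 R00 R0x.
have [B [[SB [B0 Bx]] minB]] :=
  @ex_min_size _ (fun A => poly_over A /\ A != 0 /\ A.[x] = 0) R0 (conj SR0 (conj R00 R0x)).
have [mQ SQ] := poly_over_monic SB B0.
have lB : (lead_coef B)^-1 != 0 by rewrite invr_eq0 lead_coef_eq0.
exists ((lead_coef B)^-1 *: B); split => //.
- by rewrite hornerZ Bx mulr0.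
- by rewrite size_scale //; exact: minB.
- by move=> C SC C0 Cx; rewrite size_scale //; exact: minB.
Qed.

(* Over the subfield, the minimal polynomial of x has degree m < p and divides
   X^p - y; its companion matrix C satisfies C^p = y, so det C is an element of S
   with (det C)^p = y^m, and p is coprime to m. *)
Lemma dependent_root_pth_power p x y : prime p -> S y -> y != 0 -> x ^+ p = y ->
  ~ powers_free x p -> exists c, S c /\ y = c ^+ p.
Proof.
move=> pp Sy y0 xp notfree.
have [R0 [SR0 R00 R0x sR0]] :
    exists R, [/\ poly_over R, R != 0, R.[x] = 0 & (size R <= p)%N].
  apply: NNPP => noR; apply: notfree => R SR sR Rx; apply: NNPP => R0; apply: noR.
  by exists R; split => //; apply/eqP.
have [Q [mQ SQ Qx sQR minQ]] := ex_minpoly_over SR0 R00 R0x.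
have [n sQ] : exists n, size Q = n.+2.
  have sQ1 : (1 < size Q)%N.
    rewrite ltnNge; apply/negP => /size1_polyC eQ; move: Qx (monic_neq0 mQ).
    by rewrite eQ hornerC => ->; rewrite eqxx.
  by exists (size Q).-2; case: (size Q) sQ1 => [|[|m]].
have ltnp : (n.+1 < p)%N by rewrite -ltnS -sQ ltnS (leq_trans sQR).
have [D [Rm [SD SRm eD sRm]]] := divp_monic_over (poly_over_XnsubC p Sy) SQ mQ.
have Rm0 : Rm = 0.
  apply: NNPP => /eqP Rm0; suff : (size Q <= size Rm)%N by rewrite leqNgt sRm.
  apply: minQ => //; have := congr1 (horner^~ x) eD.
  by rewrite !hornerE Qx mulr0 add0r xp subrr => <-.
have [b [Sb bp]] : exists b, S b /\ b ^+ p = y ^+ n.+1.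
  by apply: (companion_root_det mQ SQ sQ); exists D; rewrite eD Rm0 addr0.
have b0 : b != 0.
  apply: contra_neq y0 => b0; apply/eqP; move: bp.
  by rewrite b0 expr0n gtn_eqF ?prime_gt0 // => /esym/eqP; rewrite expf_eq0 => /andP[].
have cop : coprime p n.+1.
  by rewrite prime_coprime //; apply/negP => /(dvdn_leq (ltn0Sn _)); rewrite leqNgt ltnp.
exact: (pth_power_of_coprime_pow (prime_gt0 pp) cop Sb Sy b0 bp).
Qed.

Definition poly_span x z := exists R, poly_over R /\ z = R.[x].

Lemma poly_span_const x c : S c -> poly_span x c.
Proof. by move=> Sc; exists c%:P; split; [exact: poly_overC|rewrite hornerC]. Qed.

Lemma poly_span_root x : poly_span x x.
Proof. by exists 'X; split; [exact: poly_overX|rewrite hornerX]. Qed.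

Section PolySpan.
Variables (x y : f) (n : nat).
Hypotheses (n0 : (0 < n)%N) (Sy : S y) (xn : x ^+ n = y).

Let Xn := 'X^n - y%:P.
Let mXn : Xn \is monic. Proof. exact: monicXnsubC. Qed.
Let SXn : poly_over Xn. Proof. exact: poly_over_XnsubC. Qed.
Let Xnx : Xn.[x] = 0. Proof. by rewrite /Xn !hornerE xn subrr. Qed.
Let sXn : size Xn = n.+1. Proof. by rewrite size_XnsubC. Qed.

Lemma poly_span_reduce z :
  poly_span x z -> exists R, [/\ poly_over R, (size R <= n)%N & z = R.[x]].
Proof.
move=> [R [SR ->]]; have [D [Rm [SD SRm eD sRm]]] := divp_monic_over SR SXn mXn.
exists Rm; split => //; first by rewrite -ltnS -sXn.
by rewrite eD hornerD hornerM Xnx mulr0 add0r.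
Qed.

Hypothesis freex : powers_free x n.

(* The monic gcd B of R and X^n - y over S is 1: otherwise the cofactor of B in
   X^n - y would be a relation of degree < n, as B.[x] divides R.[x] != 0. *)
Lemma poly_spanV z : poly_span x z -> z != 0 -> poly_span x z^-1.
Proof.
move=> /poly_span_reduce [R [SR sR ez]] z0.
have [B [mB SB [U [V [SU SV eB]]] [DR [SDR eR]] [DQ [SDQ eQ]]]] := ex_gcd_over SR SXn mXn.
have [sB1|sB1] := leqP (size B) 1.
  have B1 : B = 1.
    by move: mB; rewrite (size1_polyC sB1) monicE lead_coefC => /eqP ->.
  exists U; split => //; apply: (mulfI z0); rewrite mulfV //.
  have := congr1 (horner^~ x) eB; rewrite B1 hornerD !hornerM Xnx mulr0 addr0 -ez hornerC.
  by rewrite mulrC.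
have Bx : B.[x] != 0.
  by apply: contra_neq z0 => Bx; rewrite ez eR hornerM Bx mulr0.
have DQx : DQ.[x] = 0.
  have := congr1 (horner^~ x) eQ; rewrite Xnx hornerM => /esym/eqP.
  by rewrite mulf_eq0 (negPf Bx) orbF => /eqP.
have sDQ : (size DQ <= n)%N.
  have := congr1 (fun P : {poly f} => size P) eQ; rewrite sXn size_Mmonic //; last first.
    by apply/eqP => DQ0; move: (monic_neq0 mXn); rewrite eQ DQ0 mul0r eqxx.
  by move=> eS; lia.
by move: (monic_neq0 mXn); rewrite eQ (freex SDQ sDQ DQx) mul0r eqxx.
Qed.

Lemma poly_span_subfield : is_subfield (poly_span x).
Proof.
split; [exact: poly_span_const subfield0|exact: poly_span_const subfield1| | |].
- move=> a b [Ra [Sa ->]] [Rb [Sb ->]]; exists (Ra - Rb).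
  by split; [exact: poly_overB|rewrite hornerD hornerN].
- move=> a b [Ra [Sa ->]] [Rb [Sb ->]]; exists (Ra * Rb).
  by split; [exact: poly_overM|rewrite hornerM].
- exact: poly_spanV.
Qed.

End PolySpan.

Lemma powers_free1 x : powers_free x 1.
Proof.
move=> R _ /size1_polyC eR; rewrite eR hornerC => ->.
by rewrite polyC0.
Qed.

Lemma coset_order_dvdP g t m : g != 0 -> coset_order S g t -> S (g ^+ m) <-> (t %| m)%N.
Proof.
move=> g0 [t0 St mint]; split => [Sm|/dvdnP [q ->]]; last first.
  by rewrite mulnC exprM; exact: subfieldX.
have e : g ^+ (m %% t) = g ^+ m / (g ^+ t) ^+ (m %/ t).
  by rewrite {2}(divn_eq m t) exprD -exprM mulnC mulrC mulKf // !expf_neq0.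
have : S (g ^+ (m %% t)) by rewrite e; apply: subfield_div => //; exact: subfieldX.
have [r0 _|r0 Sr] := posnP (m %% t); first by rewrite /dvdn r0.
by exfalso; apply: (mint (m %% t)%N); rewrite // r0 ltn_pmod.
Qed.

Lemma coset_order_pow g s p : g != 0 -> (0 < p)%N ->
  coset_order S g (s * p) -> coset_order S (g ^+ p) s.
Proof.
move=> g0 p0 co; have [sp0 Sgt _] := co.
split; first by move: sp0; rewrite muln_gt0 => /andP[].
  by rewrite -exprM mulnC.
move=> m /andP [m0 ms]; rewrite -exprM => /(coset_order_dvdP _ g0 co).
by rewrite mulnC dvdn_pmul2l // => /(dvdn_leq m0); rewrite leqNgt ms.
Qed.

(* Norm from S(h) to S, computed as a determinant on the companion matrix C of
   X^s - a: if c = R.[h] and c^p = h, then R(C)^p = C, and det C = (-1)^(s+1) a. *)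
Lemma norm_pth_root h a s p c : (0 < s)%N -> S a -> h ^+ s = a -> powers_free h s ->
  poly_span h c -> c ^+ p = h -> exists N, S N /\ N ^+ p = (-1) ^+ s.+1 * a.
Proof.
case: s => // s _ Sa hs freeh [R [SR ec]] cp.
set Xs := 'X^(s.+1) - a%:P.
have mXs : Xs \is monic by exact: monicXnsubC.
have SXs : poly_over Xs by exact: poly_over_XnsubC.
have Xsh : Xs.[h] = 0 by rewrite /Xs !hornerE hs subrr.
have [C [chC SC]] := companion_over mXs SXs (size_XnsubC _ (ltn0Sn _)).
have XsC : horner_mx C Xs = 0 by rewrite -chC Cayley_Hamilton.
have annihC P : poly_over P -> P.[h] = 0 -> horner_mx C P = 0.
  move=> SP Ph; have [D [Rm [SD SRm eD sRm]]] := divp_monic_over SP SXs mXs.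
  have Rm0 : Rm = 0.
    apply: freeh => //; first by rewrite -ltnS -(size_XnsubC a (ltn0Sn s)).
    by move: Ph; rewrite eD hornerD hornerM Xsh mulr0 add0r.
  by rewrite eD Rm0 addr0 rmorphM /= XsC mulr0.
have RCp : horner_mx C R ^+ p = C.
  have := annihC (R ^+ p - 'X) (poly_overB (poly_over_exp p SR) poly_overX).
  rewrite hornerD hornerN horner_exp hornerX -ec cp subrr => /(_ erefl).
  by rewrite rmorphB /= rmorphXn /= horner_mx_X => /eqP; rewrite subr_eq0 => /eqP.
exists (\det (horner_mx C R)); split; first by apply/mx_over_det/mx_over_horner.
rewrite -det_expr RCp; have := char_poly_det C.
rewrite chC /Xs coefB coefXn coefC /= sub0r => e.
by rewrite -[\det C](signrMK s.+1) -e !exprS; ring.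
Qed.

End Subfield.

Lemma ext_dim_adjoin (f : fieldType) (S : f -> Prop) x n : is_subfield S ->
  (0 < n)%N -> S (x ^+ n) -> powers_free S x n ->
  ext_dim S (adjoin S x) n.
Proof.
move=> sfS n0 Sxn freex; exists (fun i : 'I_n => x ^+ i); split.
- by move=> i L sfL SL Lx; exact: (subfieldX sfL).
- case: n n0 Sxn freex => // n _ Sxn freex c Sc sum0 i.
  pose R := \poly_(j < n.+1) c (inord j).
  have R0 : R = 0.
    apply: freex; [|exact: size_poly|].
    - by move=> j; rewrite coef_poly; case: ifP => _; [exact: Sc|exact: subfield0 sfS].
    - by rewrite horner_poly -[RHS]sum0; apply: eq_bigr => j _; rewrite inord_val.
  by have := congr1 (fun P : {poly f} => P`_i) R0; rewrite coef_poly ltn_ord inord_val coef0.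
- move=> z /(_ _ (poly_span_subfield sfS n0 Sxn erefl freex)).
  move=> /(_ (@poly_span_const _ _ sfS x) (poly_span_root sfS x)).
  move=> /(poly_span_reduce sfS n0 Sxn erefl) [R [SR sR ->]].
  by exists (fun i : 'I_n => R`_i); split => //; exact: horner_coef_wide.
Qed.

Lemma sum_ord_mul (V : zmodType) (F : nat -> V) s p :
  \sum_(i < s * p) F i = \sum_(j < s) \sum_(r < p) F (j * p + r)%N.
Proof.
elim: s => [|s IH]; first by rewrite mul0n !big_ord0.
rewrite big_ord_recr /= -IH mulSnr big_split_ord /=.
by congr (_ + _); apply: eq_bigr => i _; rewrite addnC.
Qed.

(* Split R by the residue of exponents mod p: R(g) = sum_r R_r(g^p) g^r, with R_r
   over k, so independence over k(g^p) forces every R_r(g^p), hence every R_r, to vanish. *)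
Lemma powers_free_tower (f : fieldType) (k : f -> Prop) g p s : is_subfield k ->
  powers_free k (g ^+ p) s -> powers_free (poly_span k (g ^+ p)) g p ->
  powers_free k g (s * p).
Proof.
move=> sfk freeh freeg R SR sR Rg; set h := g ^+ p in freeh freeg.
pose Rr r := \poly_(j < s) R`_(j * p + r).
have SRr r : poly_over k (Rr r).
  by move=> j; rewrite coef_poly; case: ifP => _ //; exact: subfield0.
pose W := \poly_(r < p) (Rr r).[h].
have SW : poly_over (poly_span k h) W.
  move=> r; rewrite coef_poly; case: ifP => _; first by exists (Rr r).
  by apply: poly_span_const => //; exact: subfield0.
have Wg : W.[g] = 0.
  rewrite -Rg (horner_coef_wide _ sR) (sum_ord_mul (fun i => R`_i * g ^+ i)) horner_poly.
  rewrite exchange_big /=; apply: eq_bigr => r _.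
  rewrite horner_poly mulr_suml; apply: eq_bigr => j _.
  by rewrite exprD mulnC exprM mulrA.
have W0 := freeg W SW (size_poly _ _) Wg.
have Rr0 r : (r < p)%N -> Rr r = 0.
  move=> rp; apply: freeh => //; first exact: size_poly.
  by have := congr1 (fun P : {poly f} => P`_r) W0; rewrite coef_poly rp coef0.
apply/polyP => i; rewrite coef0.
have [hi|hi] := ltnP i (s * p); last by rewrite nth_default // (leq_trans sR hi).
have p0 : (0 < p)%N by rewrite lt0n; apply: contraTneq hi => ->; rewrite muln0.
have := congr1 (fun P : {poly f} => P`_(i %/ p)) (Rr0 _ (ltn_pmod i p0)).
by rewrite coef_poly coef0 ltn_divLR // hi -divn_eq.
Qed.

Section CosetOrder.
Variables (f : fieldType) (k G : f -> Prop).
Hypotheses (sfk : is_subfield k) (sgG : is_mult_subgroup G)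
  (kG : forall x, k x -> x != 0 -> G x)
  (prim4 : (exists h, G h /\ coset_order k h 4) -> has_prim_root k 4)
  (prim_pi : forall p, prime p -> in_pi_tors G p -> in_pi_quot k G p -> has_prim_root k p).

Lemma group_neq0 x : G x -> x != 0. Proof. by case: sgG => + _ _ _; apply. Qed.
Lemma groupM x y : G x -> G y -> G (x * y). Proof. by case: sgG => _ _ + _; apply. Qed.
Lemma groupV x : G x -> G x^-1. Proof. by case: sgG => _ _ _; apply. Qed.

Lemma groupX x n : G x -> G (x ^+ n).
Proof.
move=> Gx; elim: n => [|n IH]; first by rewrite expr0; case: sgG.
by rewrite exprS; exact: groupM.
Qed.

(* Otherwise w = g^(t/q) / d is a q-th root of unity in G outside k, so q lies in
   pi(t(G)) and pi(G/k^* ); but then k has a primitive q-th root of unity, of which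
   w is a power. *)
Lemma coset_order_no_prime_root g t q d : G g -> coset_order k g t -> prime q ->
  (q %| t)%N -> k d -> g ^+ t = d ^+ q -> False.
Proof.
move=> Gg co pq qt kd e; have [t0 _ _] := co; have g0 := group_neq0 Gg.
have q0 := prime_gt0 pq.
have d0 : d != 0.
  apply: contraPneq e => ->; rewrite expr0n gtn_eqF //.
  by move/eqP; rewrite expf_eq0 (negPf g0) andbF.
set w := g ^+ (t %/ q) / d.
have wq : w ^+ q = 1 by rewrite expr_div_n -exprM divnK // e divff // expf_neq0.
have kw : ~ k w.
  move=> kw; have : k (g ^+ (t %/ q)) by rewrite -(divfK d0 (g ^+ _)); exact: subfieldM.
  move/(coset_order_dvdP sfk _ g0 co)/(dvdn_leq _).
  by rewrite divn_gt0 // (dvdn_leq t0 qt) leqNgt ltn_Pdiv ?prime_gt1 // => /(_ isT).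
have Gw : G w by apply: groupM; [exact: groupX|apply/groupV/kG].
have prw : q.-primitive_root w.
  have [m pm mq] := prim_order_exists q0 wq.
  case/primeP: pq => _ /(_ m mq) /orP [/eqP m1|/eqP <- //].
  by exfalso; apply: kw; move: (prim_expr_order pm); rewrite m1 expr1 => ->; exact: subfield1.
have [z [kz pz]] : has_prim_root k q.
  by apply: prim_pi => //; [exists w, q|exists g, t].
by have [i ei] := prim_rootP pz wq; apply: kw; rewrite ei; exact: subfieldX.
Qed.

(* Here g^(t/2) / d is a square root of -1 different from the ones in k, which exist
   because g^(t/4) has coset order 4. *)
Lemma coset_order_no_neg_square g t d : G g -> coset_order k g t -> (4 %| t)%N ->
  k d -> - g ^+ t = d ^+ 2 -> False.
Proof.
move=> Gg co dt kd e; have [t0 _ _] := co; have g0 := group_neq0 Gg.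
have d0 : d != 0.
  apply: contraPneq e => ->; rewrite expr0n /=.
  by apply/eqP; rewrite oppr_eq0 expf_neq0.
have [u eu] : exists u, t = (u * 4)%N by apply/dvdnP.
have u0 : (0 < u)%N by move: t0; rewrite eu; lia.
have co4 : coset_order k (g ^+ u) 4 by apply: coset_order_pow; rewrite // mulnC -eu.
have [z [kz pz]] := prim4 (ex_intro _ (g ^+ u) (conj (groupX _ Gg) co4)).
have z2 : z ^+ 2 = -1.
  have z2n1 : z ^+ 2 != 1 by rewrite -(prim_order_dvd pz).
  have : (z ^+ 2 - 1) * (z ^+ 2 + 1) = 0.
    by rewrite -subr_sqr expr1n -exprM (prim_expr_order pz) subrr.
  by move/eqP; rewrite mulf_eq0 subr_eq0 (negPf z2n1) addr_eq0 => /eqP.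
set w := g ^+ (u * 2) / d.
have w2 : w ^+ 2 = -1.
  by rewrite expr_div_n -exprM -mulnA -eu -e invrN mulrN divff // expf_neq0.
have kw : k w.
  have : (w - z) * (w + z) = 0 by rewrite -subr_sqr w2 z2 subrr.
  move/eqP; rewrite mulf_eq0 subr_eq0 addr_eq0 => /orP [/eqP -> //|/eqP ->].
  exact: subfieldN.
have : k (g ^+ (u * 2)) by rewrite -(divfK d0 (g ^+ _)); exact: subfieldM.
move/(coset_order_dvdP sfk _ g0 co); rewrite eu => /(dvdn_leq _).
by rewrite muln_gt0 u0 leq_pmul2l // => /(_ isT).
Qed.

Lemma coset_order_no_root_in_span g s p c : G g -> coset_order k g (s * p) -> prime p ->
  powers_free k (g ^+ p) s -> poly_span k (g ^+ p) c -> c ^+ p = g ^+ p -> False.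
Proof.
move=> Gg co pp freeh spc cp; have [sp0 kt _] := co.
have s0 : (0 < s)%N by move: sp0; rewrite muln_gt0 => /andP[].
have hs : (g ^+ p) ^+ s = g ^+ (s * p) by rewrite -exprM mulnC.
have [N [kN Np]] := norm_pth_root sfk s0 kt hs freeh spc cp.
have [p2|podd] := even_prime pp.
- have [so|se] := boolP (odd s).
  + apply: (coset_order_no_prime_root Gg co pp (dvdn_mull _ (dvdnn p)) kN).
    by rewrite Np -signr_odd /= so expr0 mul1r.
  + apply: (coset_order_no_neg_square Gg co _ kN).
      by rewrite p2 -[4%N]/(2 * 2)%N dvdn_pmul2r // dvdn2.
    by rewrite -p2 Np -signr_odd /= (negPf se) expr1 mulN1r.
- apply: (coset_order_no_prime_root Gg co pp (dvdn_mull _ (dvdnn p))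
    (subfieldM sfk (subfield_sign sfk s.+1) kN)).
  rewrite exprMn Np -exprM -[(-1) ^+ (s.+1 * p)]signr_odd oddM podd andbT.
  by rewrite signr_odd signrMK.
Qed.

Lemma coset_order_powers_free t g : G g -> coset_order k g t -> powers_free k g t.
Proof.
elim/ltn_ind: t g => t IH g Gg co; have [t0 kt _] := co.
have [t1|t1] := leqP t 1.
  have /eqP -> : t == 1%N by rewrite eqn_leq t1 t0.
  exact: powers_free1.
set p := pdiv t; have pp : prime p by exact: pdiv_prime.
have ets : t = (t %/ p * p)%N by rewrite divnK // pdiv_dvd.
set s := (t %/ p)%N in ets; rewrite ets in co *.
have g0 := group_neq0 Gg; set h := g ^+ p.
have coh : coset_order k h s := coset_order_pow sfk g0 (prime_gt0 pp) co.
have [s0 ks _] := coh.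
have freeh : powers_free k h s.
  apply: IH; [by rewrite ets ltn_Pmulr // prime_gt1|exact: groupX|exact: coh].
apply: powers_free_tower => //; apply: NNPP => notfree.
have [c [spc hc]] := dependent_root_pth_power (poly_span_subfield sfk s0 ks erefl freeh)
  pp (poly_span_root sfk h) (group_neq0 (groupX p Gg)) erefl notfree.
exact: (coset_order_no_root_in_span Gg co pp freeh spc (esym hc)).
Qed.

End CosetOrder.

Unset Implicit Arguments.

Theorem lemma1p1 (f : fieldType) (k G : f -> Prop) (g : f) (t : nat) :
  is_subfield k ->
  is_mult_subgroup G ->
  (forall x, k x -> x != 0 -> G x) ->
  quot_torsion k G ->
  ((exists h, G h /\ coset_order k h 4) -> has_prim_root k 4) ->
  (forall p, prime p -> in_pi_tors G p -> in_pi_quot k G p -> has_prim_root k p) ->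
  (forall p, p \in [pchar f] -> ~ in_pi_quot k G p) ->
  G g -> ~ k g ->
  coset_order k g t ->
  ext_dim k (adjoin k g) t.
Proof.
move=> sfk sgG kG _ prim4 prim_pi _ Gg _ co; have [t0 kt _] := co.
apply: ext_dim_adjoin => //.
exact: (coset_order_powers_free sfk sgG kG prim4 prim_pi Gg co).
Qed.
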